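(* Let $N\ge0$ be an integer and $a,b,c,z$ complex numbers (or indeterminates) with $z\ne0$ such that all arguments and denominators below are well defined and nonzero. Then \begin{align*} {}_{2}F_{1}^{[N]}\left(\begin{matrix}a,b\\ c\end{matrix};z\right) &=\frac{(b+Nz^{-1}-N)_{N}}{(Nz^{-1}-N)_{N}}\, {}_{2}F_{1}^{[N]}\left(\begin{matrix}c-a,b\\ c\end{matrix};\frac{N}{N-Nz^{-1}+1-b}\right) \\ &=\frac{(a+b-c+Nz^{-1}-N)_{N}}{(Nz^{-1}-N)_{N}}\, {}_{2}F_{1}^{[N]}\left(\begin{matrix}c-a,c-b\\ c\end{matrix};\frac{N}{Nz^{-1}+a+b-c}\right). \end{align*}
   Context: $(x)_m=x(x+1)\cdots(x+m-1)$ is the rising factorial, $(x)_0=1$. For $N\ge0$, \[ {}_{2}F_{1}^{[N]}\left(\begin{matrix}a,b\\ c\end{matrix};z\right)=\sum_{m=0}^{N}\frac{(a)_m(b)_m}{(c)_m\, m!}\,\frac{(N+1-m)_m}{(Nz^{-1}-m)_m}. \] *)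

From mathcomp Require Import all_boot all_order all_algebra.
Set Implicit Arguments. Unset Strict Implicit. Unset Printing Implicit Defensive.
Import Order.TTheory GRing.Theory Num.Theory.
Local Open Scope ring_scope.

Definition rfact {C : numClosedFieldType} (x : C) (m : nat) : C :=
  \prod_(i < m) (x + i%:R).

Definition F21N {C : numClosedFieldType} (N : nat) (a b c z : C) : C :=
  \sum_(m < N.+1)
    (rfact a m * rfact b m / (rfact c m * (m`!)%:R))
    * (rfact (N%:R + 1 - m%:R) m / rfact (N%:R / z - m%:R) m).

From mathcomp Require Import all_boot all_order all_algebra.
From mathcomp Require Import ring.
Set Implicit Arguments. Unset Strict Implicit. Unset Printing Implicit Defensive.
Import Order.TTheory GRing.Theory Num.Theory.
Local Open Scope ring_scope.

(* Put w = N/z.  Since (N+1-m)_m = N!/(N-m)! and (w-m)_m (w-N)_(N-m) = (w-N)_N,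
   the truncated series equals S(a,b,c; w-N) / (w-N)_N for the terminating sum
     S(a,b,c; y) = sum_(m <= N) (a)_m (b)_m / (c)_m * C(N,m) * (y)_(N-m).
   Expanding (c-a)_m / (c)_m by the Chu-Vandermonde identity, exchanging the
   sums and evaluating the inner sum by Chu-Vandermonde again gives the Pfaff
   transformation S(a,b,c; y) = (-1)^N S(c-a,b,c; 1-b-y-N); applied twice,
   together with the symmetry in a and b, it gives the Euler transformation
   S(a,b,c; y) = S(c-a,c-b,c; a+b-c+y).  The reflection
   (1-x-N)_N = (-1)^N (x)_N turns these into the two identities. *)

Lemma mul_bin_trinomial n k j : (k + j <= n)%N ->
  ('C(k + j, k) * 'C(n, k + j) = 'C(n, k) * 'C(n - k, j))%N.
Proof.
move=> le_kj_n; have le_k_n : (k <= n)%N := leq_trans (leq_addr j k) le_kj_n.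
have le_j_nk : (j <= n - k)%N by rewrite leq_subRL.
have facts_gt0 : (0 < k`! * j`! * (n - k - j)`!)%N by rewrite !muln_gt0 !fact_gt0.
have fact_kj := bin_fact (leq_addr j k); rewrite addKn in fact_kj.
have fact_n := bin_fact le_kj_n; rewrite subnDA in fact_n.
have lhsE : ('C(k + j, k) * 'C(n, k + j) * (k`! * j`! * (n - k - j)`!) = n`!)%N.
  by rewrite -fact_n -fact_kj; ring.
have rhsE : ('C(n, k) * 'C(n - k, j) * (k`! * j`! * (n - k - j)`!) = n`!)%N.
  by rewrite -(bin_fact le_k_n) -(bin_fact le_j_nk); ring.
by apply/eqP; rewrite -(eqn_pmul2r facts_gt0) lhsE rhsE.
Qed.

Lemma sum_sign_binS (R : pzRingType) (X : nat -> R) n :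
  \sum_(k < n.+2) (-1) ^+ k * 'C(n.+1, k)%:R * X k
  = \sum_(k < n.+1) (-1) ^+ k * 'C(n, k)%:R * (X k - X k.+1).
Proof.
have shift : \sum_(k < n.+1) (-1) ^+ k * 'C(n, k)%:R * X k
    = X 0%N + \sum_(k < n.+1) (-1) ^+ k.+1 * 'C(n, k.+1)%:R * X k.+1.
  rewrite big_ord_recl [in RHS]big_ord_recr /= (bin_small (ltnSn n)) mulr0 mul0r addr0.
  by rewrite expr0 bin0 !mul1r.
rewrite big_ord_recl expr0 bin0 !mul1r.
under eq_bigr do rewrite lift0 binS natrD mulrDr mulrDl.
rewrite big_split /= addrA -shift.
under [X in _ + X]eq_bigr do rewrite exprS mulN1r !mulNr.
by rewrite -big_split; apply: eq_bigr => k _; rewrite mulrBr.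
Qed.

Section RisingFactorial.
Variable C : numClosedFieldType.
Implicit Types (x y a b c : C) (m n : nat).

Lemma rfact0 x : rfact x 0 = 1.
Proof. by rewrite /rfact big_ord0. Qed.

Lemma rfactSr x m : rfact x m.+1 = rfact x m * (x + m%:R).
Proof. by rewrite /rfact big_ord_recr. Qed.

Lemma rfactS x m : rfact x m.+1 = x * rfact (x + 1) m.
Proof.
rewrite /rfact big_ord_recl addr0; congr (_ * _).
by apply: eq_bigr => i _; rewrite lift0 -natr1 addrAC addrA.
Qed.

Lemma rfactD x m n : rfact x (m + n) = rfact x m * rfact (x + m%:R) n.
Proof.
elim: n => [|n IHn]; first by rewrite addn0 rfact0 mulr1.
by rewrite addnS !rfactSr IHn natrD mulrA addrA.
Qed.

Lemma rfact_reflect x m : rfact (1 - x - m%:R) m = (-1) ^+ m * rfact x m.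
Proof.
elim: m x => [|m IHm] x; first by rewrite !rfact0 mul1r.
rewrite rfactS; have -> : 1 - x - m.+1%:R + 1 = 1 - x - m%:R by rewrite -natr1; ring.
by rewrite IHm rfactSr exprS -natr1; ring.
Qed.

Lemma rfact_natS k m : rfact (k.+1%:R : C) m = ((k + m) ^_ m)%:R.
Proof.
elim: m => [|m IHm]; first by rewrite rfact0.
by rewrite rfactSr IHm addnS ffactSS natrM mulrC -natrD addSn.
Qed.

Lemma rfact_binomial n m : (m <= n)%N ->
  rfact (n%:R + 1 - m%:R : C) m = ('C(n, m) * m`!)%:R.
Proof.
move=> le_mn; rewrite bin_ffact -[in RHS](subnK le_mn) -rfact_natS.
by rewrite -natr1 natrB //; congr rfact; ring.
Qed.

Lemma rfact_Vandermonde a c n :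
  rfact (c - a) n
  = \sum_(k < n.+1) (-1) ^+ k * 'C(n, k)%:R * (rfact a k * rfact (c + k%:R) (n - k)).
Proof.
elim: n c => [|n IHn] c; first by rewrite big_ord1 !rfact0 !mul1r.
rewrite (sum_sign_binS (fun k => rfact a k * rfact (c + k%:R) (n.+1 - k))).
rewrite rfactS addrAC IHn mulr_sumr.
apply: eq_bigr => -[k /= lt_kn] _; rewrite subSS subSn // rfactS rfactSr -natr1.
rewrite (_ : c + 1 + k%:R = c + k%:R + 1) ?addrA; ring.
Qed.

Lemma rfact_ratio_Vandermonde N a c m : (m <= N)%N -> rfact c m != 0 ->
  rfact (c - a) m / rfact c m
  = \sum_(k < N.+1) (-1) ^+ k * 'C(m, k)%:R * (rfact a k / rfact c k).
Proof.
move=> le_mN nz_cm; pose f k := (-1) ^+ k * 'C(m, k)%:R * (rfact a k / rfact c k).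
transitivity (\sum_(k < m.+1) f k).
  rewrite rfact_Vandermonde mulr_suml; apply: eq_bigr => -[k /=]; rewrite ltnS => le_km _.
  move: nz_cm; rewrite /f -(subnKC le_km) rfactD mulf_eq0 negb_or => /andP[nz_ck nz_ckm].
  by rewrite addKn; field; rewrite nz_ck nz_ckm.
rewrite (big_ord_widen N.+1 f (le_mN : m < N.+1)%N) big_mkcond; apply: eq_bigr => k _.
by case: ltnP => // lt_mk; rewrite /f bin_small // mulr0 mul0r.
Qed.

Lemma sum_bin_rfact_Vandermonde N k b y : (k <= N)%N ->
  \sum_(m < N.+1) (-1) ^+ m * ('C(m, k) * 'C(N, m))%:R
                   * (rfact b m * rfact (b + y + m%:R) (N - m))
  = (-1) ^+ k * 'C(N, k)%:R * (rfact b k * rfact y (N - k)).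
Proof.
move=> le_kN; pose F m := (-1) ^+ m * ('C(m, k) * 'C(N, m))%:R
                          * (rfact b m * rfact (b + y + m%:R) (N - m)).
rewrite -(big_mkord xpredT F) (big_cat_nat (n := k)) //= ?leqW //.
rewrite big1_seq ?add0r; last first.
  by move=> m; rewrite mem_index_iota => /andP[_ lt_mk]; rewrite /F bin_small // mul0n mulr0 mul0r.
rewrite -{1}(add0n k) big_addn big_mkord subSn //.
rewrite -[y in RHS](addrK (b + k%:R)) rfact_Vandermonde !mulr_sumr.
apply: eq_bigr => -[j /=]; rewrite ltnS => le_j _.
have le_kj : (k + j <= N)%N by rewrite -leq_subRL.
rewrite /F /= addnC mul_bin_trinomial // natrM subnDA rfactD exprD natrD.
by rewrite (_ : b + y + (k%:R + j%:R) = y + (b + k%:R) + j%:R); ring.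
Qed.
End RisingFactorial.

Definition F21N_numer {C : numClosedFieldType} (N : nat) (a b c y : C) : C :=
  \sum_(m < N.+1) rfact a m * rfact b m / rfact c m * 'C(N, m)%:R * rfact y (N - m).

Section TruncatedHypergeometric.
Variables (C : numClosedFieldType) (N : nat).
Implicit Types (a b c y z : C).

Lemma F21N_numerC a b c y : F21N_numer N a b c y = F21N_numer N b a c y.
Proof. by apply: eq_bigr => m _; rewrite (mulrC (rfact a m)). Qed.

Lemma F21N_numer_Pfaff a b c y : (forall m, (m <= N)%N -> rfact c m != 0) ->
  F21N_numer N a b c y = (-1) ^+ N * F21N_numer N (c - a) b c (1 - (b + y) - N%:R).
Proof.
move=> nz_c.
have -> : F21N_numer N a b c y
    = \sum_(m < N.+1) rfact (c - a) m / rfact c m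
        * ((-1) ^+ m * 'C(N, m)%:R * (rfact b m * rfact (b + y + m%:R) (N - m))).
  transitivity (\sum_(m < N.+1) \sum_(k < N.+1) (-1) ^+ k * (rfact a k / rfact c k)
        * ((-1) ^+ m * ('C(m, k) * 'C(N, m))%:R * (rfact b m * rfact (b + y + m%:R) (N - m)))).
    rewrite exchange_big; apply: eq_bigr => -[k /=]; rewrite ltnS => le_kN _.
    rewrite -mulr_sumr sum_bin_rfact_Vandermonde // [RHS]mulrACA.
    by rewrite [in RHS](mulrA ((-1) ^+ k)) -expr2 sqrr_sign mul1r; ring.
  apply: eq_bigr => -[m /=]; rewrite ltnS => le_mN _.
  rewrite (rfact_ratio_Vandermonde a le_mN (nz_c m le_mN)) mulr_suml.
  by apply: eq_bigr => k _; ring.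
rewrite /F21N_numer mulr_sumr; apply: eq_bigr => -[m /=]; rewrite ltnS => le_mN _.
have -> : rfact (b + y + m%:R) (N - m) = (-1) ^+ (N - m) * rfact (1 - (b + y) - N%:R) (N - m).
  rewrite (_ : 1 - (b + y) - N%:R = 1 - (b + y + m%:R) - (N - m)%:R) ?rfact_reflect ?signrMK //.
  by rewrite natrB //; ring.
by rewrite -[in (-1) ^+ N](subnKC le_mN) exprD; ring.
Qed.

Lemma F21N_numer_Euler a b c y : (forall m, (m <= N)%N -> rfact c m != 0) ->
  F21N_numer N a b c y = F21N_numer N (c - a) (c - b) c (a + b - c + y).
Proof.
move=> nz_c; rewrite F21N_numer_Pfaff // [RHS]F21N_numerC [RHS]F21N_numer_Pfaff //.
by rewrite [in RHS]F21N_numerC; congr (_ * F21N_numer _ _ _ _ _); ring.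
Qed.

Lemma F21NE a b c z :
  rfact (N%:R / z - N%:R) N != 0 -> (forall m, (m <= N)%N -> rfact c m != 0) ->
  F21N N a b c z = F21N_numer N a b c (N%:R / z - N%:R) / rfact (N%:R / z - N%:R) N.
Proof.
move=> nz_D nz_c; set w := N%:R / z.
rewrite /F21N /F21N_numer mulr_suml; apply: eq_bigr => -[m /=]; rewrite ltnS => le_mN _.
have splitD : rfact (w - N%:R) N = rfact (w - N%:R) (N - m) * rfact (w - m%:R) m.
  by rewrite -{2}(subnK le_mN) rfactD natrB //; congr (_ * rfact _ _); ring.
move: nz_D; rewrite splitD mulf_eq0 negb_or => /andP[nz_Dl nz_Dr].
have nz_fact : (m`!)%:R != 0 :> C by rewrite pnatr_eq0 -lt0n fact_gt0.
by rewrite rfact_binomial // natrM; field; rewrite nz_c // nz_Dl nz_Dr nz_fact.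
Qed.

End TruncatedHypergeometric.

Theorem corollary4p3 (C : numClosedFieldType) (N : nat) (a b c z : C) :
  z != 0 ->
  (* the arguments of the two right-hand sides are well defined *)
  N%:R - N%:R / z + 1 - b != 0 ->
  N%:R / z + a + b - c != 0 ->
  (* the prefactor denominator is nonzero *)
  rfact (N%:R / z - N%:R) N != 0 ->
  (* all denominators in the three sums are nonzero *)
  (forall m : nat, (m <= N)%N -> rfact c m != 0) ->
  (forall m : nat, (m <= N)%N -> rfact (N%:R / z - m%:R) m != 0) ->
  (forall m : nat, (m <= N)%N ->
     rfact (N%:R / (N%:R / (N%:R - N%:R / z + 1 - b)) - m%:R) m != 0) ->
  (forall m : nat, (m <= N)%N ->
     rfact (N%:R / (N%:R / (N%:R / z + a + b - c)) - m%:R) m != 0) ->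
  F21N N a b c z
    = rfact (b + N%:R / z - N%:R) N / rfact (N%:R / z - N%:R) N
      * F21N N (c - a) b c (N%:R / (N%:R - N%:R / z + 1 - b))
  /\
  F21N N a b c z
    = rfact (a + b - c + N%:R / z - N%:R) N / rfact (N%:R / z - N%:R) N
      * F21N N (c - a) (c - b) c (N%:R / (N%:R / z + a + b - c)).
Proof.
(* The sixth hypothesis
   follows from the fourth. *)
move=> _ _ _ nz_D nz_c _ /(_ N (leqnn N)) nz_DP /(_ N (leqnn N)) nz_DE.
have [-> | N_gt0] := posnP N.
  by rewrite /F21N !big_ord1 !rfact0 !divr1 !mul1r.
have NdivNK x : N%:R / (N%:R / x) = x :> C by rewrite invf_div mulrC divfK // pnatr_eq0 -lt0n.
rewrite (F21NE _ _ nz_D nz_c) (F21NE _ _ nz_DP nz_c) (F21NE _ _ nz_DE nz_c) !NdivNK.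
rewrite !NdivNK -(addrA b) -(addrA (a + b - c)) in nz_DP nz_DE *.
set y := N%:R / z - N%:R in nz_D nz_DP nz_DE *.
have argP : N%:R - N%:R / z + 1 - b - N%:R = 1 - (b + y) - N%:R by rewrite /y; ring.
have argE : N%:R / z + a + b - c - N%:R = a + b - c + y by rewrite /y; ring.
rewrite argP argE rfact_reflect mulf_eq0 signr_eq0 /= in nz_DP nz_DE *.
split; first by rewrite F21N_numer_Pfaff // invfM invr_sign; field; rewrite nz_D nz_DP.
by rewrite (F21N_numer_Euler a b) //; field; rewrite nz_D nz_DE.
Qed.
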